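(* Fix integers $c\ge2$, $k\ge2$. Let $P$ be the RAM program that, on a dataset $x$ with $n=|x|$ (read from $\texttt{input\_len}$), performs independent biased coin flips where flip number $i+1$ ($i=0,1,2,\dots$) succeeds with probability $\frac{1}{(\max\{n-i,0\}+k)^c}$ (computed by forming $b=\max\{n-i,0\}+k$, computing $b^c$ by $c-1$ multiplications, and drawing randomness), stops at the first success, and outputs the number $i$ of unsuccessful flips preceding it; each loop iteration executes a fixed number of instructions independent of $x$ and $n$, so the runtime is a deterministic (affine) function of the output. Then $P$ is $\varepsilon$-JOT-DP in the unbounded setting, where $\varepsilon=2c\ln\!\big(\frac{k+1}{k-1}\big)$.
   Context: Datasets are finite sequences of records; two datasets are adjacent if their insert-delete distance (minimum number of single-record insertions/deletions transforming one into the other) is at most $1$. A program runs on $x$ in an execution environment $\mathit{env}$ (initial machine state) compatible with $x$, with random output $\mathrm{out}(P(x,\mathit{env}))$ and random runtime $T_P(x,\mathit{env})$ (number of RAM instructions executed). $P$ is $\varepsilon$-JOT-DP in the unbounded setting if for all adjacent datasets $x,x'$ of arbitrary lengths, all compatible $\mathit{env},\mathit{env}'$ and all sets $S$ of (output, runtime) pairs, $\Pr[(\mathrm{out}(P(x,\mathit{env})),T_P(x,\mathit{env}))\in S]\le e^{\varepsilon}\Pr[(\mathrm{out}(P(x',\mathit{env}')),T_P(x',\mathit{env}'))\in S]$. Thus the output has pmf $f_n(i)=p_n(i)\prod_{j=0}^{i-1}(1-p_n(j))$ with $p_n(j)=1/(\max\{n-j,0\}+k)^c$. *)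

From Stdlib Require Import Reals List.
From Coquelicot Require Import Coquelicot.
Open Scope R_scope.

(* Success probability of coin flip number j+1 on a dataset of size n:
   p_n(j) = 1 / (max(n-j,0) + k)^c   (n - j is truncated nat subtraction). *)
Definition flip_p (c k n j : nat) : R := / (INR ((n - j) + k)%nat) ^ c.

Fixpoint fail_prod (c k n i : nat) : R :=
  match i with
  | O => 1
  | S i' => fail_prod c k n i' * (1 - flip_p c k n i')
  end.
Definition out_pmf (c k n i : nat) : R := flip_p c k n i * fail_prod c k n i.

Definition del_one {T : Type} (x x' : list T) : Prop :=
  exists (a b : list T) (r : T), x = a ++ r :: b /\ x' = a ++ b.

Definition adjacent {T : Type} (x x' : list T) : Prop :=
  x = x' \/ del_one x x' \/ del_one x' x.

(* The program P run on dataset x in environment env (compatible with x):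
   the output i has pmf out_pmf c k |x|, and the runtime is the deterministic
   affine function t0 + t1 * i of the output (t0, t1 : instruction counts that
   do not depend on x, n or env). *)
Definition P_joint_prob {T Env : Type} (c k t0 t1 : nat)
    (x : list T) (env : Env) (S : nat * nat -> bool) : R :=
  Series (fun i => if S (i, (t0 + t1 * i)%nat) then out_pmf c k (length x) i else 0).

Definition JOT_DP_unbounded {T Env : Type} (compat : list T -> Env -> Prop)
    (Pr : list T -> Env -> (nat * nat -> bool) -> R) (eps : R) : Prop :=
  forall (x x' : list T) (env env' : Env),
    adjacent x x' -> compat x env -> compat x' env' ->
    forall S : nat * nat -> bool,
      Pr x env S <= exp eps * Pr x' env' S.

(* Write b_n(j) = max(n-j,0) + k, so that p_n(j) = b_n(j)^-c.  Since
   b_(n+1)(j+1) = b_n(j), the process on n+1 records is the process on n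
   records preceded by one extra flip of probability q = (n+1+k)^-c:
   f_(n+1)(i+1) = (1-q) f_n(i).  Comparing f_(n+1)(i+1) with f_n(i+1) thus
   only involves the factors 1-q, 1-p_n(i) and p_n(i+1)/p_n(i), each of which
   lies within a factor R = ((k+1)/(k-1))^c of 1; hence the two pmfs differ
   pointwise by at most R^2 = exp eps, and the runtime, a function of the
   output, adds nothing. *)
From Stdlib Require Import Reals List Lra Lia.
From Coquelicot Require Import Coquelicot.
Open Scope R_scope.

Lemma flip_p_shift (c k n j : nat) : flip_p c k (S n) (S j) = flip_p c k n j.
Proof. reflexivity. Qed.

Lemma fail_prod_shift (c k n i : nat) :
  fail_prod c k (S n) (S i) = (1 - flip_p c k (S n) 0) * fail_prod c k n i.
Proof.
  induction i as [|i IH]; simpl; [ring|].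
  simpl in IH; rewrite IH, flip_p_shift; ring.
Qed.

Lemma out_pmf_shift (c k n i : nat) :
  out_pmf c k (S n) (S i) = (1 - flip_p c k (S n) 0) * out_pmf c k n i.
Proof. unfold out_pmf; rewrite fail_prod_shift, flip_p_shift; ring. Qed.

Lemma out_pmf_succ (c k n i : nat) :
  out_pmf c k n (S i) = flip_p c k n (S i) * (1 - flip_p c k n i) * fail_prod c k n i.
Proof. unfold out_pmf; simpl; ring. Qed.

Definition flip_ratio (c k : nat) : R := ((INR k + 1) / (INR k - 1)) ^ c.

Lemma exp_twice_ln_flip_ratio (c k : nat) : (2 <= k)%nat ->
  exp (2 * INR c * ln ((INR k + 1) / (INR k - 1))) = flip_ratio c k ^ 2.
Proof.
  intros Hk; assert (HK : 2 <= INR k) by (apply (le_INR 2); lia).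
  replace (2 * INR c) with (INR (c * 2)) by (rewrite mult_INR; simpl; ring).
  fold (Rpower ((INR k + 1) / (INR k - 1)) (INR (c * 2))).
  rewrite Rpower_pow by (apply Rdiv_lt_0_compat; lra).
  apply pow_mult.
Qed.

Section FlipBounds.

Variables c k : nat.
Hypothesis Hc : (1 <= c)%nat.
Hypothesis Hk : (2 <= k)%nat.

Let k_ge2 : 2 <= INR k.
Proof. apply (le_INR 2); lia. Qed.

Let base_ge (n j : nat) : INR k <= INR (n - j + k).
Proof. apply le_INR; lia. Qed.

Lemma flip_p_pos (n j : nat) : 0 < flip_p c k n j.
Proof.
  pose proof (base_ge n j); apply Rinv_0_lt_compat, pow_lt; lra.
Qed.

Lemma flip_p_le_inv_k (n j : nat) : flip_p c k n j <= / INR k.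
Proof.
  pose proof (base_ge n j).
  apply Rinv_le_contravar; [lra|].
  destruct c as [|c']; [lia|]; simpl.
  rewrite <- (Rmult_1_r (INR k)) at 1.
  apply Rmult_le_compat; try lra; apply pow_R1_Rle; lra.
Qed.

Lemma flip_p_le_1 (n j : nat) : flip_p c k n j <= 1.
Proof.
  pose proof (flip_p_le_inv_k n j).
  assert (/ INR k <= 1) by (rewrite <- Rinv_1; apply Rinv_le_contravar; lra).
  lra.
Qed.

Lemma flip_ratio_ge_base : (INR k + 1) / (INR k - 1) <= flip_ratio c k.
Proof.
  unfold flip_ratio; rewrite <- pow_1 at 1.
  apply Rle_pow; [|lia].
  apply Rmult_le_reg_r with (INR k - 1); [lra|].
  unfold Rdiv; rewrite Rmult_assoc, Rinv_l; lra.
Qed.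

Lemma flip_ratio_ge1 : 1 <= flip_ratio c k.
Proof.
  pose proof flip_ratio_ge_base.
  enough (1 <= (INR k + 1) / (INR k - 1)) by lra.
  apply Rmult_le_reg_r with (INR k - 1); [lra|].
  unfold Rdiv; rewrite Rmult_assoc, Rinv_l; lra.
Qed.

(* 1 - p >= 1 - 1/k = (k-1)/k >= (k-1)/(k+1). *)
Lemma flip_ratio_mul_one_sub_flip_p (n j : nat) :
  1 <= flip_ratio c k * (1 - flip_p c k n j).
Proof.
  pose proof (flip_p_le_inv_k n j); pose proof (flip_p_le_1 n j).
  apply Rle_trans with ((INR k + 1) / (INR k - 1) * (1 - / INR k)).
  - replace ((INR k + 1) / (INR k - 1) * (1 - / INR k))
      with ((INR k + 1) / INR k) by (field; lra).
    apply Rmult_le_reg_r with (INR k); [lra|].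
    unfold Rdiv; rewrite Rmult_assoc, Rinv_l; lra.
  - assert (/ INR k <= 1) by (rewrite <- Rinv_1; apply Rinv_le_contravar; lra).
    apply Rmult_le_compat; [apply Rlt_le, Rdiv_lt_0_compat; lra|lra| |lra].
    exact flip_ratio_ge_base.
Qed.

Lemma flip_p_le_succ (n j : nat) : flip_p c k n j <= flip_p c k n (S j).
Proof.
  pose proof (base_ge n (S j)).
  apply Rinv_le_contravar; [apply pow_lt; lra|].
  apply pow_incr; split; [lra|]; apply le_INR; lia.
Qed.

(* b_n(j) <= b_n(j+1) + 1 <= ((k+1)/(k-1)) b_n(j+1), as b_n(j+1) >= k. *)
Lemma flip_p_succ_le (n j : nat) :
  flip_p c k n (S j) <= flip_ratio c k * flip_p c k n j.
Proof.
  set (r := (INR k + 1) / (INR k - 1)).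
  set (b := INR (n - j + k)); set (b' := INR (n - S j + k)).
  assert (Hb : INR k <= b) by apply base_ge.
  assert (Hb' : INR k <= b') by apply base_ge.
  assert (Hbb' : b <= b' + 1) by (unfold b, b'; rewrite <- S_INR; apply le_INR; lia).
  assert (Hr0 : 0 < r) by (apply Rdiv_lt_0_compat; lra).
  assert (Hr : b' + 1 <= r * b').
  { unfold r; apply Rmult_le_reg_r with (INR k - 1); [lra|].
    replace ((INR k + 1) / (INR k - 1) * b' * (INR k - 1)) with ((INR k + 1) * b')
      by (field; lra).
    nra. }
  unfold flip_p, flip_ratio; fold r b b'.
  rewrite <- !pow_inv, <- Rpow_mult_distr.
  apply pow_incr; split; [apply Rlt_le, Rinv_0_lt_compat; lra|].
  replace (/ b') with (r * / (r * b')) by (field; lra).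
  apply Rmult_le_compat_l; [lra|].
  apply Rinv_le_contravar; lra.
Qed.

Lemma fail_prod_nonneg (n i : nat) : 0 <= fail_prod c k n i.
Proof.
  induction i as [|i IH]; simpl; [lra|].
  pose proof (flip_p_le_1 n i); apply Rmult_le_pos; lra.
Qed.

Lemma out_pmf_nonneg (n i : nat) : 0 <= out_pmf c k n i.
Proof.
  apply Rmult_le_pos; [apply Rlt_le, flip_p_pos|apply fail_prod_nonneg].
Qed.

Lemma sum_n_out_pmf (n m : nat) : sum_n (out_pmf c k n) m = 1 - fail_prod c k n (S m).
Proof.
  induction m as [|m IH].
  - rewrite sum_O; unfold out_pmf; simpl; ring.
  - rewrite sum_Sn, IH; unfold plus; simpl; unfold out_pmf; simpl; ring.
Qed.

Lemma ex_series_out_pmf (n : nat) : ex_series (out_pmf c k n).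
Proof.
  destruct (ex_finite_lim_seq_incr (sum_n (out_pmf c k n)) 1) as [l Hl].
  - intros m; rewrite sum_Sn; unfold plus; simpl.
    pose proof (out_pmf_nonneg n (S m)); lra.
  - intros m; rewrite sum_n_out_pmf.
    pose proof (fail_prod_nonneg n (S m)); lra.
  - exists l; exact Hl.
Qed.

Lemma out_pmf_succ_len_le (n i : nat) :
  out_pmf c k (S n) i <= flip_ratio c k * out_pmf c k n i.
Proof.
  pose proof flip_ratio_ge1.
  destruct i as [|i].
  - unfold out_pmf; simpl; rewrite !Rmult_1_r, <- (flip_p_shift c k n 0).
    pose proof (flip_p_le_succ (S n) 0); pose proof (flip_p_pos (S n) 1); nra.
  - rewrite out_pmf_shift, out_pmf_succ; unfold out_pmf.
    pose proof (flip_p_le_succ n i) as Hab.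
    pose proof (flip_ratio_mul_one_sub_flip_p n i) as Ha.
    pose proof (flip_p_pos (S n) 0); pose proof (flip_p_pos n i).
    pose proof (flip_p_pos n (S i)); pose proof (fail_prod_nonneg n i).
    set (q := flip_p c k (S n) 0) in *; set (a := flip_p c k n i) in *.
    set (b := flip_p c k n (S i)) in *; set (F := fail_prod c k n i) in *.
    assert (0 <= q * (a * F)) by (apply Rmult_le_pos; [lra|apply Rmult_le_pos; lra]).
    apply Rle_trans with (b * F); [nra|].
    replace (flip_ratio c k * (b * (1 - a) * F))
      with ((flip_ratio c k * (1 - a)) * (b * F)) by ring.
    assert (0 <= b * F) by (apply Rmult_le_pos; lra).
    nra.
Qed.

Lemma out_pmf_le_succ_len (n i : nat) :
  out_pmf c k n i <= flip_ratio c k ^ 2 * out_pmf c k (S n) i.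
Proof.
  pose proof flip_ratio_ge1.
  destruct i as [|i].
  - unfold out_pmf; simpl; rewrite !Rmult_1_r, <- (flip_p_shift c k n 0).
    pose proof (flip_p_succ_le (S n) 0); pose proof (flip_p_pos (S n) 0).
    assert (0 <= flip_ratio c k * flip_p c k (S n) 0) by (apply Rmult_le_pos; lra).
    nra.
  - rewrite out_pmf_shift, out_pmf_succ; unfold out_pmf.
    pose proof (flip_p_succ_le n i) as Hba.
    pose proof (flip_ratio_mul_one_sub_flip_p (S n) 0) as Hq.
    pose proof (flip_p_le_1 n i); pose proof (flip_p_pos n i).
    pose proof (flip_p_pos n (S i)); pose proof (fail_prod_nonneg n i).
    set (q := flip_p c k (S n) 0) in *; set (a := flip_p c k n i) in *.
    set (b := flip_p c k n (S i)) in *; set (F := fail_prod c k n i) in *.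
    assert (b * F <= flip_ratio c k * a * F) by (apply Rmult_le_compat_r; lra).
    assert (0 <= a * (b * F)) by (apply Rmult_le_pos; [|apply Rmult_le_pos]; lra).
    apply Rle_trans with (flip_ratio c k * a * F); [nra|].
    replace (flip_ratio c k ^ 2 * ((1 - q) * (a * F)))
      with ((flip_ratio c k * (1 - q)) * (flip_ratio c k * a * F)) by ring.
    assert (0 <= flip_ratio c k * a * F) by (apply Rmult_le_pos; [nra|lra]).
    nra.
Qed.

Lemma out_pmf_adjacent_le (n n' i : nat) :
  n = n' \/ n = S n' \/ n' = S n ->
  out_pmf c k n i <= flip_ratio c k ^ 2 * out_pmf c k n' i.
Proof.
  pose proof flip_ratio_ge1.
  assert (HR2 : flip_ratio c k <= flip_ratio c k ^ 2) by (simpl; nra).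
  intros [-> | [-> | ->]].
  - pose proof (out_pmf_nonneg n' i); nra.
  - pose proof (out_pmf_succ_len_le n' i); pose proof (out_pmf_nonneg n' i); nra.
  - apply out_pmf_le_succ_len.
Qed.

End FlipBounds.

Lemma ex_series_mask (P : nat -> bool) (b : nat -> R) :
  (forall i, 0 <= b i) -> ex_series b -> ex_series (fun i => if P i then b i else 0).
Proof.
  intros Hb Hex; apply (@ex_series_le R_AbsRing R_CompleteNormedModule _ b); [|exact Hex].
  intros i; change (norm ?x) with (Rabs x).
  specialize (Hb i); destruct (P i); rewrite Rabs_pos_eq; lra.
Qed.

Lemma Series_le_scal (a b : nat -> R) (C : R) :
  (forall i, 0 <= a i <= C * b i) -> ex_series b -> Series a <= C * Series b.
Proof.
  intros Hab Hex; rewrite <- Series_scal_l; apply Series_le; [exact Hab|].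
  exact (@ex_series_scal_l R_AbsRing R_NormedModule C b Hex).
Qed.

Lemma del_one_length {T : Type} (x x' : list T) :
  del_one x x' -> length x = S (length x').
Proof. intros (a & b & r & -> & ->); rewrite !length_app; simpl; lia. Qed.

Theorem mainTheorem8 (c k t0 t1 : nat) (T Env : Type)
    (compat : list T -> Env -> Prop) :
  (2 <= c)%nat -> (2 <= k)%nat ->
  JOT_DP_unbounded compat (@P_joint_prob T Env c k t0 t1)
    (2 * INR c * ln ((INR k + 1) / (INR k - 1))).
Proof.
  intros Hc Hk x x' env env' Hadj _ _ A.
  assert (Hlen : length x = length x' \/ length x = S (length x')
                 \/ length x' = S (length x)).
  { destruct Hadj as [-> | [Hd | Hd]];
      [left; reflexivity | right; left | right; right]; exact (del_one_length _ _ Hd). }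
  unfold P_joint_prob; rewrite exp_twice_ln_flip_ratio by exact Hk.
  apply Series_le_scal.
  - intros i; destruct (A _); [|lra]; split.
    + apply out_pmf_nonneg; lia.
    + apply out_pmf_adjacent_le; [lia|lia|exact Hlen].
  - apply ex_series_mask; [apply out_pmf_nonneg; lia|apply ex_series_out_pmf; lia].
Qed.
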